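(* Let $V=\{1,\dots,p\}$ and let $F:2^V\to\mathbb{R}$ be a submodular, nondecreasing set-function with $F(\varnothing)=0$ and $F(\{k\})>0$ for all $k\in V$. Let $f$ be the Lovász extension of $F$ and define $\Omega:\mathbb{R}^p\to\mathbb{R}$ by $\Omega(w)=f(|w|)$. Then: (i) $\Omega$ is a norm on $\mathbb{R}^p$; (ii) $\Omega$ is the convex envelope (largest convex function lying below) of the function $g:w\mapsto F(\mathrm{Supp}(w))$ on the unit $\ell_\infty$-ball $\{w\in\mathbb{R}^p:\|w\|_\infty\leqslant 1\}$; (iii) the dual norm of $\Omega$, $\Omega^\ast(s)=\max_{\Omega(w)\leqslant 1} s^\top w$, satisfies $$\Omega^\ast(s)=\max_{A\subset V,\,A\neq\varnothing}\frac{\|s_A\|_1}{F(A)}=\max_{A\in\mathcal{T}}\frac{\|s_A\|_1}{F(A)}.$$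
   Context: For $w\in\mathbb{R}^p$, $|w|$ is the vector of absolute values of its components, $\mathrm{Supp}(w)=\{j\in V: w_j\neq 0\}$, and $s_A$ is the subvector of $s$ indexed by $A$. The Lovász extension $f:\mathbb{R}_+^p\to\mathbb{R}$ of $F$ is defined as follows: for $w\in\mathbb{R}_+^p$, order the components as $w_{j_1}\geqslant\cdots\geqslant w_{j_p}\geqslant 0$ and set $f(w)=\sum_{k=1}^p w_{j_k}[F(\{j_1,\dots,j_k\})-F(\{j_1,\dots,j_{k-1}\})]$. A set $A\subset V$ is stable if for every $B\supset A$ with $B\neq A$ one has $F(B)>F(A)$. A nonempty set $A$ is separable if there is a partition $A=B_1\cup\cdots\cup B_k$ into $k\geqslant 2$ nonempty sets with $F(A)=F(B_1)+\cdots+F(B_k)$, and inseparable otherwise. $\mathcal{T}$ denotes the family of nonempty subsets of $V$ that are both stable and inseparable. *)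

From mathcomp Require Import all_boot all_order all_algebra.
From mathcomp Require Import reals.
Set Implicit Arguments. Unset Strict Implicit. Unset Printing Implicit Defensive.
Import Order.TTheory GRing.Theory Num.Theory.
Local Open Scope ring_scope.

Section Defs.
Variables (R : realType) (p : nat).
Implicit Types (F : {set 'I_p} -> R) (A B : {set 'I_p}) (w s : 'I_p -> R).

Definition submodular F :=
  forall A B, F (A :|: B) + F (A :&: B) <= F A + F B.

Definition set_nondecreasing F := forall A B, A \subset B -> F A <= F B.

(* indices sorted so that w_{j_1} >= ... >= w_{j_p} *)
Definition lovasz_order w : seq 'I_p := sort (fun i j => w j <= w i) (enum 'I_p).

(* f(w) = sum_k w_{j_k} [F({j_1..j_k}) - F({j_1..j_{k-1}})] *)
Definition lovasz F w : R :=
  let s := lovasz_order w in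
  \sum_(i : 'I_p) w i * (F [set x in take (index i s).+1 s] - F [set x in take (index i s) s]).

Definition Omega F w : R := lovasz F (fun i => `|w i|).

Definition Supp w : {set 'I_p} := [set j | w j != 0].

Definition is_norm (N : ('I_p -> R) -> R) :=
  [/\ forall w, 0 <= N w,
      forall w, N w = 0 <-> w = (fun _ => 0),
      forall (a : R) w, N (fun i => a * w i) = `|a| * N w
    & forall w1 w2, N (fun i => w1 i + w2 i) <= N w1 + N w2].

Definition in_linf_ball w := forall i, `|w i| <= 1.

Definition convex_on_linf_ball (h : ('I_p -> R) -> R) :=
  forall x y (t : R), in_linf_ball x -> in_linf_ball y -> 0 <= t <= 1 ->
    h (fun i => t * x i + (1 - t) * y i) <= t * h x + (1 - t) * h y.

Definition convex_envelope_on_linf_ball (h g : ('I_p -> R) -> R) :=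
  [/\ convex_on_linf_ball h,
      forall w, in_linf_ball w -> h w <= g w
    & forall h', convex_on_linf_ball h' -> (forall w, in_linf_ball w -> h' w <= g w) ->
        forall w, in_linf_ball w -> h' w <= h w].

Definition dot s w : R := \sum_i s i * w i.

Definition l1_restr s A : R := \sum_(i in A) `|s i|.

Definition stable F A := forall B, A \proper B -> F A < F B.

Definition separable F A :=
  A != set0 /\
  exists P : {set {set 'I_p}}, [/\ partition P A, (1 < #|P|)%N & F A = \sum_(B in P) F B].

Definition inseparable F A := A != set0 /\ ~ separable F A.

Definition in_T F A := [/\ A != set0, stable F A & inseparable F A].

Definition is_max_of (P : R -> Prop) (M : R) := P M /\ forall x, P x -> x <= M.

End Defs.

From mathcomp Require Import all_boot all_order all_algebra.
From mathcomp Require Import reals.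
From mathcomp Require Import lra.
From Stdlib Require Import FunctionalExtensionality.
Import Order.TTheory GRing.Theory Num.Theory.
Set Implicit Arguments. Unset Strict Implicit. Unset Printing Implicit Defensive.
Local Open Scope ring_scope.

(* For an ordering o of V, the greedy vector g_o(j_k) = F({j_1..j_k}) - F({j_1..j_(k-1)})
   satisfies g_o(A) <= F(A) for every A by submodularity, with equality on the prefixes of o.
   Abel summation along the decreasing ordering of w >= 0 writes w = sum_k l_k 1_(T_k) and
   f(w) = sum_k l_k F(T_k) with l_k >= 0 and T_1 c T_2 c ... the level sets of w; comparing
   with any other ordering gives f(w) = max_o <w, g_o>.  Hence f is sublinear and monotone on
   R_+^p, and Omega is a norm.  For ||w||_oo <= 1, w = sum_k l_k (sign(w) 1_(T_k)) is a
   combination of points with supports T_k and total weight at most 1, so Jensen's inequality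
   bounds every convex minorant of F(Supp .) by Omega.  Finally s^T w <= sum_k l_k ||s_(T_k)||_1
   <= M Omega(w) with M = max_A ||s_A||_1 / F(A), attained at sign(s) 1_A / F(A).  Among the
   maximizing sets, one of minimal cardinality is inseparable, and its largest superset with
   the same value of F is stable, still inseparable and still maximizing. *)

(* The k-th weight read along o; past the end of o it is 0. *)
Definition wnth (T : Type) (R : nmodType) (w : T -> R) (o : seq T) (k : nat) : R :=
  nth 0 (map w o) k.

Lemma wnth_pred (T : Type) (R : nmodType) (P : R -> Prop) (w : T -> R) o k :
  P 0 -> (forall i, P (w i)) -> P (wnth w o k).
Proof. by move=> P0 Pw; elim: o k => [|x o IHo] [|k] //; [apply: Pw | apply: IHo]. Qed.

Lemma telescope_wnth (T : Type) (R : zmodType) (w : T -> R) o :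
  \sum_(k < size o) (wnth w o k - wnth w o k.+1) = wnth w o 0.
Proof.
rewrite -(big_mkord xpredT (fun k => wnth w o k - wnth w o k.+1)).
rewrite (@telescope_sumr_eq _ _ _ (fun k => - wnth w o k)) // => [|k _].
  by rewrite /wnth nth_default ?size_map // oppr0 add0r opprK.
by rewrite opprK addrC.
Qed.

Lemma big_Abel (R : pzRingType) (T : Type) (w g : T -> R) (o : seq T) :
  \sum_(i <- o) w i * g i =
  \sum_(k < size o) (wnth w o k - wnth w o k.+1) * \sum_(i <- take k.+1 o) g i.
Proof.
elim: o => [|x o IHo]; first by rewrite big_nil big_ord0.
have wnth_cons k : wnth w (x :: o) k.+1 = wnth w o k by [].
rewrite big_cons IHo; change (size (x :: o)) with (size o).+1.
rewrite big_ord_recl /= take0 big_seq1.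
under [in RHS]eq_bigr => k _ do rewrite /bump add1n !wnth_cons big_cons mulrDr.
by rewrite big_split /= -mulr_suml telescope_wnth wnth_cons addrA -mulrDl subrK.
Qed.

Section LinfBall.
Variables (R : realType) (p : nat).

Lemma in_linf_ball_sum n (lam : nat -> R) (x : nat -> 'I_p -> R) :
  (forall k, 0 <= lam k) -> \sum_(k < n) lam k <= 1 -> (forall k, in_linf_ball (x k)) ->
  in_linf_ball (fun i => \sum_(k < n) lam k * x k i).
Proof.
move=> lam_ge0 sum_le1 x_ball i; apply: le_trans (ler_norm_sum _ _ _) (le_trans _ sum_le1).
apply: ler_sum => k _; rewrite normrM ger0_norm // -[X in _ <= X]mulr1.
by apply: ler_wpM2l; [apply: lam_ge0 | apply: x_ball].
Qed.

Lemma convex_on_linf_ball_sum (h : ('I_p -> R) -> R) n (lam : nat -> R)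
    (x : nat -> 'I_p -> R) :
  convex_on_linf_ball h ->
  (forall k, 0 <= lam k) -> \sum_(k < n) lam k <= 1 -> (forall k, in_linf_ball (x k)) ->
  h (fun i => \sum_(k < n) lam k * x k i) <=
  \sum_(k < n) lam k * h (x k) + (1 - \sum_(k < n) lam k) * h (fun _ => 0).
Proof.
move=> h_convex; elim: n lam => [|n IHn] lam lam_ge0 sum_le1 x_ball.
  have -> : (fun i => \sum_(k < 0) lam k * x k i) = (fun _ => 0).
    by apply: functional_extensionality => i; rewrite big_ord0.
  by rewrite !big_ord0 add0r subr0 mul1r.
rewrite big_ord_recr /= in sum_le1.
set l := lam n in sum_le1 *; set S := \sum_(k < n) lam k in sum_le1 *.
have S_ge0 : 0 <= S by apply: sumr_ge0.
have l_ge0 : 0 <= l by apply: lam_ge0.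
have one_l_ge0 : 0 <= 1 - l by lra.
pose lam' k := lam k / (1 - l).
have lamE k : (k < n)%N -> (1 - l) * lam' k = lam k.
  move=> ltkn; have [l1|l_neq1] := eqVneq l 1.
    (* dividing by 1 - l = 0 is harmless: all the other weights vanish *)
    have S0 : S = 0 by lra.
    have := @psumr_eq0P _ _ xpredT (fun k : 'I_n => lam k) (fun k _ => lam_ge0 k) S0
      (Ordinal ltkn) isT.
    by rewrite /lam' /= => ->; rewrite mul0r mulr0.
  by rewrite /lam' mulrC divfK // subr_eq0 eq_sym.
have sum'E : (1 - l) * \sum_(k < n) lam' k = S.
  by rewrite mulr_sumr; apply: eq_bigr => k _; apply: lamE.
have sum'_le1 : \sum_(k < n) lam' k <= 1.
  have [l1|l_neq1] := eqVneq l 1.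
    by rewrite big1 // => k _; rewrite /lam' l1 subrr invr0 mulr0.
  have l_lt1 : 0 < 1 - l by rewrite subr_gt0 lt_neqAle l_neq1; lra.
  by rewrite -(ler_pM2l l_lt1) sum'E mulr1; lra.
have lam'_ge0 k : 0 <= lam' k by apply: divr_ge0.
set y := fun i => \sum_(k < n) lam' k * x k i.
have -> : (fun i => \sum_(k < n.+1) lam k * x k i) = (fun i => l * x n i + (1 - l) * y i).
  apply: functional_extensionality => i; rewrite big_ord_recr /= addrC mulr_sumr.
  by congr (_ + _); apply: eq_bigr => k _; rewrite mulrA lamE.
apply: le_trans (h_convex _ _ _ (x_ball n) (in_linf_ball_sum lam'_ge0 sum'_le1 x_ball) _) _.
  by rewrite l_ge0 -subr_ge0.
have := ler_wpM2l one_l_ge0 (IHn lam' lam'_ge0 sum'_le1 x_ball).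
rewrite mulrDr mulr_sumr mulrA mulrBr mulr1 sum'E.
under eq_bigr do rewrite mulrA lamE //.
rewrite !big_ord_recr /= -/l -/S; lra.
Qed.

End LinfBall.

Definition prefix_set (T : finType) (o : seq T) (n : nat) : {set T} := [set x in take n o].

Lemma prefix_set0 (T : finType) (o : seq T) : prefix_set o 0 = set0.
Proof. by apply/setP => x; rewrite !inE take0. Qed.

Lemma prefix_setS (T : finType) (o : seq T) n : prefix_set o n \subset prefix_set o n.+1.
Proof.
apply/subsetP => x; rewrite !inE -(take_takel _ (leqnSn n)).
exact/mem_subseq/take_subseq.
Qed.

Section Lovasz.
Variables (R : realType) (p : nat) (F : {set 'I_p} -> R).
Hypotheses (F_submod : submodular F) (F_mono : set_nondecreasing F) (F0 : F set0 = 0).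
Implicit Types (A B C S T : {set 'I_p}) (o : seq 'I_p) (s u v w : 'I_p -> R).

Lemma F_ge0 A : 0 <= F A.
Proof. by rewrite -F0; apply/F_mono/sub0set. Qed.

Lemma submodular_marginal_le S T j : S \subset T -> j \notin T ->
  F (j |: T) - F T <= F (j |: S) - F S.
Proof.
move=> sST jNT; have := F_submod (j |: S) T.
rewrite -setUA (setUidPr sST) setIUl (setIidPl sST).
rewrite (disjoint_setI0 (_ : [disjoint [set j] & T])) ?disjoints1 // set0U.
lra.
Qed.

(* Edmonds' greedy vector of the ordering o, a vertex of the base polytope of F. *)
Definition marginal (o : seq 'I_p) (i : 'I_p) : R :=
  F (prefix_set o (index i o).+1) - F (prefix_set o (index i o)).

Lemma marginal_ge0 o i : 0 <= marginal o i.
Proof. by rewrite subr_ge0; apply/F_mono/prefix_setS. Qed.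

Section Ordering.
Variable o : seq 'I_p.
Hypothesis o_perm : perm_eq o (enum 'I_p).

Lemma size_ordering : size o = p.
Proof. by rewrite (perm_size o_perm) size_enum_ord. Qed.

Lemma uniq_ordering : uniq o.
Proof. by rewrite (perm_uniq o_perm) enum_uniq. Qed.

Lemma mem_ordering i : i \in o.
Proof. by rewrite (perm_mem o_perm) mem_enum. Qed.

Lemma mem_prefix_set i n : (i \in prefix_set o n) = (index i o < n)%N.
Proof. by rewrite inE in_take ?mem_ordering. Qed.

Lemma index_ordering_lt i : (index i o < p)%N.
Proof. by rewrite -[X in (_ < X)%N]size_ordering index_mem mem_ordering. Qed.

Lemma prefix_set_full : prefix_set o p = setT.
Proof. by apply/setP => i; rewrite mem_prefix_set in_setT index_ordering_lt. Qed.

Lemma index_nth_ordering x0 n : (n < p)%N -> index (nth x0 o n) o = n.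
Proof. by move=> ltnp; rewrite index_uniq ?size_ordering ?uniq_ordering. Qed.

Lemma prefix_set_nth x0 n : (n < p)%N -> prefix_set o n.+1 = nth x0 o n |: prefix_set o n.
Proof.
move=> ltnp; apply/setP => i; rewrite in_setU1 !mem_prefix_set ltnS leq_eqVlt.
congr (_ || _); rewrite -{2}(nth_index x0 (mem_ordering i)).
by rewrite nth_uniq ?uniq_ordering // size_ordering ?index_ordering_lt.
Qed.

Lemma nth_notin_prefix_set x0 n : (n < p)%N -> nth x0 o n \notin prefix_set o n.
Proof. by move=> ltnp; rewrite mem_prefix_set index_nth_ordering ?ltnn. Qed.

Lemma marginal_nth x0 n : (n < p)%N ->
  marginal o (nth x0 o n) = F (prefix_set o n.+1) - F (prefix_set o n).
Proof. by move=> ltnp; rewrite /marginal index_nth_ordering. Qed.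

Lemma sum_marginal_prefix_set n : (n <= p)%N ->
  \sum_(i in prefix_set o n) marginal o i = F (prefix_set o n).
Proof.
elim: n => [_|n IHn ltnp]; first by rewrite prefix_set0 big_set0 F0.
pose x0 := Ordinal ltnp.
rewrite (prefix_set_nth x0) // big_setU1 /=; last exact: nth_notin_prefix_set.
rewrite IHn; last exact: ltnW.
by rewrite marginal_nth // (prefix_set_nth x0) // subrK.
Qed.

Lemma sum_marginal_le A : \sum_(i in A) marginal o i <= F A.
Proof.
suff sum_le n : (n <= p)%N ->
    \sum_(i in A :&: prefix_set o n) marginal o i <= F (A :&: prefix_set o n).
  by have := sum_le p (leqnn p); rewrite prefix_set_full setIT.
elim: n => [_|n IHn ltnp]; first by rewrite prefix_set0 setI0 big_set0 F0.
pose x0 := Ordinal ltnp; set j := nth x0 o n; set T := prefix_set o n.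
have jNT : j \notin T by apply: nth_notin_prefix_set.
rewrite (prefix_set_nth x0) // -/j -/T.
have [jA|jNA] := boolP (j \in A); last first.
  have Aj0 : A :&: [set j] = set0 by apply/disjoint_setI0; rewrite disjoint_sym disjoints1.
  by rewrite setIUr Aj0 set0U; apply/IHn/ltnW.
rewrite setIUr (setIidPr (_ : [set j] \subset A)) ?sub1set // big_setU1 /=; last first.
  by apply: contra jNT; rewrite inE => /andP[].
have := submodular_marginal_le (subsetIr A T) jNT.
rewrite /j marginal_nth // -prefix_set_nth // -/j -/T.
have := IHn (ltnW ltnp); lra.
Qed.

Lemma big_ordering_Abel w (g : 'I_p -> R) :
  \sum_i w i * g i =
  \sum_(k < p) (wnth w o k - wnth w o k.+1) * \sum_(i in prefix_set o k.+1) g i.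
Proof.
rewrite -big_enum -(perm_big _ o_perm) big_Abel size_ordering.
apply: eq_bigr => k _; congr (_ * _).
by rewrite big_uniq ?take_uniq ?uniq_ordering //; apply: eq_bigl => i; rewrite inE.
Qed.

End Ordering.

Lemma perm_lovasz_order w : perm_eq (lovasz_order w) (enum 'I_p).
Proof. by rewrite /lovasz_order perm_sort. Qed.

Definition level_coef w k :=
  wnth w (lovasz_order w) k - wnth w (lovasz_order w) k.+1.

Definition level_set w k := prefix_set (lovasz_order w) k.+1.

Lemma level_coef_ge0 w k : (forall i, 0 <= w i) -> 0 <= level_coef w k.
Proof.
move=> w_ge0; rewrite subr_ge0.
have [ltkp|lepk] := ltnP k.+1 p; last first.
  rewrite {1}/wnth nth_default ?size_map ?size_ordering ?perm_lovasz_order //.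
  by apply: (@wnth_pred _ _ (fun x => 0 <= x)).
have : sorted (fun a b : R => b <= a) (map w (lovasz_order w)).
  by rewrite sorted_map; apply: sort_sorted => i j; apply: le_total.
by move=> /(sortedP 0)/(_ k); rewrite size_map size_ordering ?perm_lovasz_order //; apply.
Qed.

Lemma sum_level_coef w : \sum_(k < p) level_coef w k = wnth w (lovasz_order w) 0.
Proof. by rewrite -telescope_wnth size_ordering // perm_lovasz_order. Qed.

Lemma big_level_Abel w (g : 'I_p -> R) :
  \sum_i w i * g i = \sum_(k < p) level_coef w k * \sum_(i in level_set w k) g i.
Proof. exact: (big_ordering_Abel (perm_lovasz_order w) w g). Qed.

Lemma lovasz_marginalE w : lovasz F w = \sum_i w i * marginal (lovasz_order w) i.
Proof. by []. Qed.

Lemma lovasz_levelE w : lovasz F w = \sum_(k < p) level_coef w k * F (level_set w k).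
Proof.
rewrite lovasz_marginalE big_level_Abel; apply: eq_bigr => k _.
by rewrite sum_marginal_prefix_set ?perm_lovasz_order.
Qed.

(* With sum_marginal_prefix_set this says f(w) = max_o <w, g_o>. *)
Lemma marginal_dot_le_lovasz o w : perm_eq o (enum 'I_p) -> (forall i, 0 <= w i) ->
  \sum_i w i * marginal o i <= lovasz F w.
Proof.
move=> o_perm w_ge0; rewrite big_level_Abel lovasz_levelE; apply: ler_sum => k _.
by apply: ler_wpM2l; [apply: level_coef_ge0 | apply: sum_marginal_le].
Qed.

Lemma lovasz_ge0 w : (forall i, 0 <= w i) -> 0 <= lovasz F w.
Proof.
move=> w_ge0; rewrite lovasz_levelE; apply: sumr_ge0 => k _.
by apply: mulr_ge0; [apply: level_coef_ge0 | apply: F_ge0].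
Qed.

Lemma lovasz_subadd u v : (forall i, 0 <= u i) -> (forall i, 0 <= v i) ->
  lovasz F (fun i => u i + v i) <= lovasz F u + lovasz F v.
Proof.
move=> u_ge0 v_ge0; rewrite lovasz_marginalE.
under eq_bigr do rewrite mulrDl.
by rewrite big_split /= lerD // marginal_dot_le_lovasz // perm_lovasz_order.
Qed.

Lemma le_lovasz u v : (forall i, 0 <= u i) -> (forall i, u i <= v i) ->
  lovasz F u <= lovasz F v.
Proof.
move=> u_ge0 le_uv; have v_ge0 i : 0 <= v i := le_trans (u_ge0 i) (le_uv i).
rewrite lovasz_marginalE; apply: le_trans (marginal_dot_le_lovasz (perm_lovasz_order u) v_ge0).
by apply: ler_sum => i _; apply: ler_wpM2r; [apply: marginal_ge0 | apply: le_uv].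
Qed.

Lemma lovaszZ c w : 0 <= c -> (forall i, 0 <= w i) ->
  lovasz F (fun i => c * w i) = c * lovasz F w.
Proof.
move=> c_ge0 w_ge0; have cw_ge0 i : 0 <= c * w i by apply: mulr_ge0.
apply/eqP; rewrite eq_le; apply/andP; split.
  rewrite lovasz_marginalE; under eq_bigr do rewrite -mulrA.
  by rewrite -mulr_sumr ler_wpM2l // marginal_dot_le_lovasz // perm_lovasz_order.
rewrite lovasz_marginalE mulr_sumr.
under eq_bigr do rewrite mulrA.
by rewrite marginal_dot_le_lovasz // perm_lovasz_order.
Qed.

Lemma lovasz_le_F w A : (forall i, 0 <= w i) -> (forall i, w i <= 1) ->
  (forall i, i \notin A -> w i = 0) -> lovasz F w <= F A.
Proof.
move=> w_ge0 w_le1 w_supp; rewrite lovasz_marginalE (bigID (mem A)) /=.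
rewrite [X in _ + X]big1 ?addr0 => [|i /w_supp ->]; last by rewrite mul0r.
apply: le_trans (sum_marginal_le (perm_lovasz_order w) A).
apply: ler_sum => i _; rewrite -[X in _ <= X]mul1r.
by apply: ler_wpM2r; [apply: marginal_ge0 | apply: w_le1].
Qed.

Lemma perm_enum_setC A : perm_eq (enum A ++ enum (~: A)) (enum 'I_p).
Proof.
apply: uniq_perm; last by move=> i; rewrite mem_cat !mem_enum in_setC; case: (i \in A).
  by rewrite cat_uniq !enum_uniq andbT /=; apply/hasPn => i; rewrite !mem_enum in_setC => ->.
exact: enum_uniq.
Qed.

Lemma lovasz_indicator A c : 0 <= c ->
  lovasz F (fun i => c * (i \in A)%:R) = c * F A.
Proof.
move=> c_ge0; have ind_ge0 i : 0 <= (i \in A)%:R :> R by case: (i \in A).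
rewrite lovaszZ //; congr (_ * _); apply/eqP; rewrite eq_le; apply/andP; split.
  by apply: lovasz_le_F => [// | i | i /negbTE ->] //; case: (i \in A).
set o := enum A ++ enum (~: A); have o_perm : perm_eq o (enum 'I_p) := perm_enum_setC A.
have prefixA : prefix_set o #|A| = A.
  by apply/setP => i; rewrite inE take_size_cat ?mem_enum // cardE.
have le_Ap : (#|A| <= p)%N by rewrite -[X in (_ <= X)%N]card_ord max_card.
have := sum_marginal_prefix_set o_perm le_Ap; rewrite prefixA => <-.
apply: le_trans (marginal_dot_le_lovasz o_perm ind_ge0).
rewrite [X in _ <= X](bigID (mem A)) /= [X in _ <= _ + X]big1 => [|i /negbTE ->].
  by rewrite addr0; under [X in _ <= X]eq_bigr => i -> do rewrite mul1r.
by rewrite mul0r.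
Qed.

Lemma Omega_ge0 w : 0 <= Omega F w.
Proof. by apply: lovasz_ge0 => i; apply: normr_ge0. Qed.

Lemma OmegaZ a w : Omega F (fun i => a * w i) = `|a| * Omega F w.
Proof.
rewrite /Omega; have -> : (fun i => `|a * w i|) = (fun i => `|a| * `|w i|).
  by apply: functional_extensionality => i; rewrite normrM.
by rewrite lovaszZ // => i; apply: normr_ge0.
Qed.

Lemma Omega_triangle w1 w2 :
  Omega F (fun i => w1 i + w2 i) <= Omega F w1 + Omega F w2.
Proof.
apply: le_trans (lovasz_subadd (fun i => normr_ge0 (w1 i)) (fun i => normr_ge0 (w2 i))).
by apply: le_lovasz => i; [apply: normr_ge0 | apply: ler_normD].
Qed.

Lemma level_decomposition w i :
  w i = \sum_(k < p) level_coef w k * (i \in level_set w k)%:R.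
Proof.
have := big_level_Abel w (fun j => (j == i)%:R).
rewrite (bigD1 i) //= eqxx mulr1 big1 ?addr0 => [->|j /negbTE ->]; last by rewrite mulr0.
apply: eq_bigr => k _; congr (_ * _); have [iT|iNT] := boolP (i \in level_set w k).
  by rewrite (bigD1 i) //= eqxx big1 ?addr0 // => j /andP[_ /negbTE ->].
by apply: big1 => j jT; case: eqP => // ji; rewrite -ji jT in iNT.
Qed.

Lemma Omega_convex : convex_on_linf_ball (Omega F).
Proof.
move=> x y t _ _ /andP[t_ge0 t_le1].
apply: le_trans (Omega_triangle (fun i => t * x i) (fun i => (1 - t) * y i)) _.
by rewrite !OmegaZ !ger0_norm // subr_ge0.
Qed.

Lemma Omega_le_F_Supp w : in_linf_ball w -> Omega F w <= F (Supp w).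
Proof.
move=> w_ball; apply: lovasz_le_F => [i|//|i]; first exact: normr_ge0.
by rewrite inE negbK => /eqP ->; rewrite normr0.
Qed.

Lemma convex_le_Omega h : convex_on_linf_ball h ->
  (forall w, in_linf_ball w -> h w <= F (Supp w)) ->
  forall w, in_linf_ball w -> h w <= Omega F w.
Proof.
move=> h_convex h_le w w_ball.
pose a i := `|w i|; have a_ge0 i : 0 <= a i by apply: normr_ge0.
pose sg i : R := if 0 <= w i then 1 else -1.
pose x k i := sg i * (i \in level_set a k)%:R.
have x_ball k : in_linf_ball (x k).
  move=> i; rewrite normrM /sg.
  by case: ifP => _; case: (_ \in _); rewrite ?normrN normr1 ?normr0 ?mulr1 ?mulr0.
have Supp_x k : Supp (x k) = level_set a k.
  apply/setP => i; rewrite inE /x /sg mulf_eq0 negb_or.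
  by case: ifP => _; case: (_ \in _); rewrite ?oppr_eq0 ?oner_eq0 ?eqxx.
have wE : w = fun i => \sum_(k < p) level_coef a k * x k i.
  apply: functional_extensionality => i; rewrite /x.
  under eq_bigr do rewrite mulrCA.
  rewrite -mulr_sumr -level_decomposition /a /sg.
  by case: lerP => w_i; [rewrite mul1r ger0_norm | rewrite mulN1r ltr0_norm ?opprK].
have sum_le1 : \sum_(k < p) level_coef a k <= 1.
  by rewrite sum_level_coef; apply: (@wnth_pred _ _ (fun r => r <= 1)).
have h0_le0 : h (fun _ => 0) <= 0.
  have Supp0 : Supp (fun _ : 'I_p => 0 : R) = set0 by apply/setP => i; rewrite !inE eqxx.
  by have := h_le (fun _ => 0); rewrite Supp0 F0; apply=> i; rewrite normr0.
rewrite {1}wE; apply: le_trans (convex_on_linf_ball_sum h_convex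
  (fun k => level_coef_ge0 k a_ge0) sum_le1 x_ball) _.
rewrite /Omega lovasz_levelE -[X in _ <= X]addr0; apply: lerD.
  apply: ler_sum => k _; rewrite -Supp_x.
  by apply: ler_wpM2l; [apply: level_coef_ge0 | apply: h_le].
by apply: mulr_ge0_le0; rewrite // subr_ge0.
Qed.

Lemma Omega_convex_envelope :
  convex_envelope_on_linf_ball (Omega F) (fun w => F (Supp w)).
Proof. by split; [exact: Omega_convex | exact: Omega_le_F_Supp | exact: convex_le_Omega]. Qed.

Lemma F_bigcup_le (I : finType) (P : pred I) (f : I -> {set 'I_p}) :
  F (\bigcup_(i | P i) f i) <= \sum_(i | P i) F (f i).
Proof.
apply: (big_ind2 (fun S r => F S <= r)) => [|S1 r1 S2 r2 le1 le2|//]; first by rewrite F0.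
by have := F_submod S1 S2; have := F_ge0 (S1 :&: S2); lra.
Qed.

Lemma l1_restr_ge0 s A : 0 <= l1_restr s A.
Proof. by apply: sumr_ge0 => i _. Qed.

Lemma l1_restr_subset s A B : A \subset B -> l1_restr s A <= l1_restr s B.
Proof.
move=> AB; rewrite /l1_restr [X in _ <= X](big_setID A) /= (setIidPr AB) lerDl.
exact: l1_restr_ge0.
Qed.

Definition ratio s A := l1_restr s A / F A.

Hypothesis F_singleton_gt0 : forall k, 0 < F [set k].

Lemma Omega_eq0 w : Omega F w = 0 <-> w = (fun _ => 0).
Proof.
split=> [Omega0|->]; last first.
  by rewrite /Omega lovasz_marginalE; apply: big1 => i _; rewrite normr0 mul0r.
apply: functional_extensionality => i; apply/eqP; rewrite -normr_eq0 eq_le normr_ge0 andbT.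
have : `|w i| * F [set i] <= Omega F w.
  rewrite -lovasz_indicator //; apply: le_lovasz => j.
    by apply: mulr_ge0 => //; case: (j \in [set i]).
  by rewrite inE; case: eqP => [->|_]; rewrite ?mulr1 ?mulr0.
by rewrite Omega0 pmulr_lle0.
Qed.

Lemma Omega_is_norm : is_norm (Omega F).
Proof.
split; [exact: Omega_ge0 | exact: Omega_eq0 | exact: OmegaZ | exact: Omega_triangle].
Qed.

Lemma F_gt0 A : A != set0 -> 0 < F A.
Proof.
by case/set0Pn => k kA; apply: lt_le_trans (F_singleton_gt0 k) (F_mono _); rewrite sub1set.
Qed.

Lemma l1_restr_le_ratio s M A : (forall B, B != set0 -> ratio s B <= M) ->
  l1_restr s A <= M * F A.
Proof.
move=> ratio_le; have [->|A0] := eqVneq A set0; first by rewrite F0 mulr0 /l1_restr big_set0.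
by rewrite -ler_pdivrMr ?F_gt0 ?ratio_le.
Qed.

Lemma dot_le_dual_bound s M w : (forall A, l1_restr s A <= M * F A) -> 0 <= M ->
  Omega F w <= 1 -> dot s w <= M.
Proof.
move=> l1_le M_ge0 Omega_le1; pose a i := `|w i|.
apply: le_trans (_ : \sum_i a i * `|s i| <= M).
  by apply: ler_sum => i _; rewrite /a -normrM mulrC ler_norm.
apply: le_trans (ler_piMr M_ge0 Omega_le1).
rewrite big_level_Abel /Omega lovasz_levelE mulr_sumr; apply: ler_sum => k _.
rewrite mulrCA; apply: ler_wpM2l; last exact: l1_le.
by apply: level_coef_ge0 => i; apply: normr_ge0.
Qed.

Lemma ratio_attained s A : A != set0 -> exists2 w, Omega F w <= 1 & dot s w = ratio s A.
Proof.
move=> A0; have FA_gt0 := F_gt0 A0.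
pose sg i : R := if 0 <= s i then 1 else -1.
have sg_norm i : `|sg i| = 1 by rewrite /sg; case: ifP => _; rewrite ?normrN normr1.
have ind_ge0 i : 0 <= (F A)^-1 * (i \in A)%:R.
  by apply: mulr_ge0; [rewrite invr_ge0 ltW | case: (i \in A)].
exists (fun i => sg i * ((F A)^-1 * (i \in A)%:R)).
  rewrite /Omega; have -> : (fun i => `|sg i * ((F A)^-1 * (i \in A)%:R)|) =
                            (fun i => (F A)^-1 * (i \in A)%:R).
    by apply: functional_extensionality => i; rewrite normrM sg_norm mul1r ger0_norm.
  by rewrite lovasz_indicator ?mulVf ?gt_eqF // invr_ge0 ltW.
rewrite /dot /ratio /l1_restr mulr_suml [LHS](bigID (mem A)) /=.
rewrite [X in _ + X]big1 ?addr0 => [|i /negbTE ->]; last by rewrite !mulr0.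
apply: eq_bigr => i ->; rewrite mulr1 /sg.
by case: lerP => s_i; [rewrite mul1r ger0_norm | rewrite mulN1r ltr0_norm // mulrN mulNr].
Qed.

Lemma inseparable_min_card_maximizer s M A :
  (forall B, B != set0 -> ratio s B <= M) -> A != set0 -> ratio s A = M ->
  (forall B, B != set0 -> ratio s B = M -> (#|A| <= #|B|)%N) -> ~ separable F A.
Proof.
move=> ratio_le A0 ratioA minA [_ [P [partP cardP FAP]]].
have P0 X : X \in P -> X != set0 by apply: partition_neq0 partP.
have slack_ge0 X : X \in P -> 0 <= M * F X - l1_restr s X.
  by move=> _; rewrite subr_ge0 l1_restr_le_ratio.
have slack0 : \sum_(X in P) (M * F X - l1_restr s X) = 0.
  rewrite sumrB -mulr_sumr -FAP.
  have -> : \sum_(X in P) l1_restr s X = l1_restr s A.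
    by rewrite [RHS](set_partition_big _ partP).
  by rewrite -ratioA /ratio divfK ?subrr // gt_eqF // F_gt0.
have ratioX X : X \in P -> ratio s X = M.
  move=> XP; have /eqP := psumr_eq0P slack_ge0 slack0 XP.
  by rewrite subr_eq0 => /eqP l1X; rewrite /ratio -l1X mulfK // gt_eqF // F_gt0 // P0.
have [X [Y [XP YP XY]]] := card_gt1P cardP.
have := minA X (P0 X XP) (ratioX X XP); apply/negP; rewrite -ltnNge.
rewrite (card_partition partP) (bigD1 X) //= (bigD1 Y) /=; last by rewrite YP eq_sym.
by rewrite -[X in (X < _)%N]addn0 ltn_add2l addn_gt0 card_gt0 P0.
Qed.

Lemma stable_of_max_card_eqF A B : A \subset B -> F B = F A ->
  (forall C, A \subset C -> F C = F A -> (#|C| <= #|B|)%N) -> stable F B.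
Proof.
move=> AB FBA maxB C BC; rewrite lt_def F_mono ?proper_sub // andbT.
apply: contraTneq (proper_card BC) => FCB; rewrite -leqNgt maxB //.
  exact: subset_trans AB (proper_sub BC).
by rewrite FCB.
Qed.

Lemma separable_of_eqF_superset A B : A \subset B -> F B = F A ->
  separable F B -> separable F A.
Proof.
move=> AB FBA [B0 [P [partP cardP FBP]]].
have P0 X : X \in P -> X != set0 by apply: partition_neq0 partP.
have coverA : \bigcup_(X in P) (X :&: A) = A.
  apply/setP => x; apply/bigcupP/idP => [[X _]|xA]; first by rewrite inE => /andP[].
  have /bigcupP[X XP xX] : x \in cover P by rewrite (cover_partition partP) (subsetP AB).
  by exists X; rewrite // inE xX.
have FXA X : X \in P -> F (X :&: A) = F X.
  have slack_ge0 Y : Y \in P -> 0 <= F Y - F (Y :&: A).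
    by move=> _; rewrite subr_ge0 F_mono ?subsetIl.
  move=> XP; apply/eqP; rewrite eq_sym -subr_eq0; apply/eqP/(psumr_eq0P slack_ge0) => //.
  apply/eqP; rewrite eq_le sumr_ge0 // andbT sumrB -FBP FBA subr_le0.
  by rewrite -[X in F X <= _]coverA F_bigcup_le.
have XA0 X : X \in P -> X :&: A != set0.
  move=> XP; apply: contraTneq (F_gt0 (P0 X XP)) => XA_0.
  by rewrite -FXA // XA_0 F0 ltxx.
have disjXA : {in P &, forall X Y, Y != X -> [disjoint X :&: A & Y :&: A]}.
  move=> X Y XP YP YX; apply: disjointW (subsetIl _ _) (subsetIl _ _) _.
  by apply: (trivIsetP (partition_trivIset partP)); rewrite // eq_sym.
have [partPA injA] := indexed_partition disjXA XA0.
have [X [_ [XP _ _]]] := card_gt1P cardP.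
split; first by apply: contraNneq (XA0 X XP) => ->; rewrite setI0.
exists [set X :&: A | X in P]; split.
- by rewrite -[X in partition _ X]coverA -cover_imset.
- by rewrite card_in_imset.
- by rewrite big_imset //= -FBA FBP; apply: eq_bigr => Y YP; rewrite FXA.
Qed.

Lemma exists_T_maximizer s M A :
  (forall B, B != set0 -> ratio s B <= M) -> A != set0 -> ratio s A = M ->
  exists2 B, in_T F B & ratio s B = M.
Proof.
move=> ratio_le A0 ratioA.
pose maximizer B := (B != set0) && (ratio s B == M).
have maxA : maximizer A by rewrite /maximizer A0 ratioA eqxx.
have [A1 /andP[A10 /eqP ratioA1] minA1] := arg_minnP (fun B => #|B|) maxA.
have insepA1 : ~ separable F A1.
  apply: (inseparable_min_card_maximizer ratio_le A10 ratioA1) => B B0 ratioB.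
  by apply: minA1; rewrite /maximizer B0 ratioB eqxx.
pose closure_of_A1 C := (A1 \subset C) && (F C == F A1).
have A1A1 : closure_of_A1 A1 by rewrite /closure_of_A1 subxx eqxx.
have [B /andP[A1B /eqP FBA1] maxB] := arg_maxnP (fun C => #|C|) A1A1.
have B0 : B != set0 by apply: contraNneq A10 => B0; rewrite -subset0 -B0.
exists B; first split=> //.
- apply: (stable_of_max_card_eqF A1B FBA1) => C A1C FCA1.
  by apply: maxB; rewrite /closure_of_A1 A1C FCA1 eqxx.
- by split=> // /(separable_of_eqF_superset A1B FBA1).
apply/eqP; rewrite eq_le ratio_le //= -ratioA1 /ratio FBA1.
by rewrite ler_wpM2r ?invr_ge0 ?F_ge0 ?l1_restr_subset.
Qed.

Lemma dual_norm_formula s : (0 < p)%N ->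
  exists M : R,
    [/\ is_max_of (fun x => exists w, Omega F w <= 1 /\ x = dot s w) M,
        is_max_of (fun x => exists A, A != set0 /\ x = l1_restr s A / F A) M
      & is_max_of (fun x => exists A, in_T F A /\ x = l1_restr s A / F A) M].
Proof.
move=> p_gt0; pose x0 : 'I_p := Ordinal p_gt0.
have x00 : [set x0] != set0 by apply/set0Pn; exists x0; rewrite inE.
have [A /= A0 maxA] := @arg_maxP _ _ _ [set x0] (fun A => A != set0) (ratio s) x00.
set M := ratio s A; have ratio_le B : B != set0 -> ratio s B <= M by apply: maxA.
have M_ge0 : 0 <= M by apply: divr_ge0; [apply: l1_restr_ge0 | apply: F_ge0].
have [B TB ratioB] := exists_T_maximizer ratio_le A0 (erefl M).
exists M; split.
- split=> [|_ [w [Omega_le1 ->]]].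
    by have [w ? ?] := ratio_attained s A0; exists w.
  by apply: dot_le_dual_bound => // C; apply: l1_restr_le_ratio.
- by split=> [|_ [C [C0 ->]]]; [exists A | apply: ratio_le].
- by split=> [|_ [C [[C0 _ _] ->]]]; [exists B; rewrite -ratioB | apply: ratio_le].
Qed.

End Lovasz.

Theorem proposition1 (R : realType) (p : nat) (F : {set 'I_p} -> R) :
  (0 < p)%N ->
  submodular F -> set_nondecreasing F -> F set0 = 0 ->
  (forall k : 'I_p, 0 < F [set k]) ->
  [/\ is_norm (Omega F),
      convex_envelope_on_linf_ball (Omega F) (fun w => F (Supp w))
    & forall s : 'I_p -> R,
        exists M : R,
          [/\ is_max_of (fun x => exists w, Omega F w <= 1 /\ x = dot s w) M,
              is_max_of (fun x => exists A, A != set0 /\ x = l1_restr s A / F A) M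
            & is_max_of (fun x => exists A, in_T F A /\ x = l1_restr s A / F A) M]].
Proof.
move=> p_gt0 F_submod F_mono F0 F_singleton_gt0; split.
- exact: Omega_is_norm.
- exact: Omega_convex_envelope.
- by move=> s; apply: dual_norm_formula.
Qed.
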